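(* Let $n\ge1$, $\mathcal{I}=\mathbb{Z}_{\ge1}$, $\Gamma_l=\{x\in\mathbb{Z}^n_{\ge0}\mid\sum_{i=1}^nx_i=l\}$ for $l\in\mathcal{I}$, and let $\pi_l$ be probability distributions on $\Gamma_l$ strictly positive on every element. Suppose: (a) whenever $x,x+e_j-e_k\in\Gamma_i$ and $y,y+e_j-e_k\in\Gamma_{i+1}$ ($i\in\mathcal{I}$) with $x_j=y_j$, $x_k=y_k$, we have $\frac{\pi_i(x+e_j-e_k)}{\pi_i(x)}=\frac{\pi_{i+1}(y+e_j-e_k)}{\pi_{i+1}(y)}$; (b) for each $i\in\mathcal{I}$ there is a constant $a_i$ depending only on $i$ such that whenever $x\in\Gamma_i$, $x+e_j,y\in\Gamma_{i+1}$, $y+e_j\in\Gamma_{i+2}$ with $x_j=y_j$, we have $\frac{\pi_{i+1}(x+e_j)}{\pi_i(x)}=a_i\frac{\pi_{i+2}(y+e_j)}{\pi_{i+1}(y)}$. Then the family $(\Gamma_l,\pi_l)_{l\in\mathcal{I}}$ has product-form distribution: there exist $f_i:\mathbb{Z}_{\ge0}\to\mathbb{R}_{>0}$, $i=1,\dots,n$, with $\pi_l(x)=Z_l^{-1}\prod_{i=1}^nf_i(x_i)$ for all $l\in\mathcal{I}$ and $x\in\Gamma_l$, where $Z_l=\sum_{x\in\Gamma_l}\prod_if_i(x_i)$.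
   Context: $e_j$ denotes the $j$-th standard basis vector of $\mathbb{Z}^n$. *)

From HB Require Import structures.
From mathcomp Require Import all_boot all_order all_algebra.
Set Implicit Arguments. Unset Strict Implicit. Unset Printing Implicit Defensive.
Import Order.TTheory GRing.Theory Num.Theory.
Local Open Scope ring_scope.

Notation vecZ n := {ffun 'I_n -> int}.

Definition ebasis (n : nat) (j : 'I_n) : vecZ n := [ffun i => ((i == j) : nat)%:Z].

Definition inGamma (n l : nat) (x : vecZ n) : bool :=
  [forall i, 0 <= x i] && (\sum_i x i == l%:Z).

(* Explicit duplicate-free enumeration of Gamma_l *)
Definition Gamma_seq (n l : nat) : seq (vecZ n) :=
  map (fun y : {ffun 'I_n -> 'I_l.+1} => [ffun i => (val (y i))%:Z])
    (enum [pred y : {ffun 'I_n -> 'I_l.+1} | (\sum_i (val (y i)) == l)%N]).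

Definition Zconst {R : realFieldType} (n l : nat) (f : 'I_n -> nat -> R) : R :=
  \sum_(x <- Gamma_seq n l) \prod_i f i `|x i|%N.

(** Put [f_k(m) = pi_m(m e_k) / c_m]. Condition (a) at level 1 makes
    [pi_2(e_p + e_q) / (pi_1(e_p) pi_1(e_q))] a constant [gam] for [p <> q].
    A point [z] of [Gamma_(l+3)] is either a corner [(l+3) e_k] or has two
    positive coordinates [j <> k]; in the latter case condition (b) applied to
    [y = z - e_j], [x = y - e_k] reads
    [pi(z) pi(x) a_(l+1) = pi(x + e_j) pi(y)], while
    [prod_i f_i(.)] takes equal values on [(z, x)] and [(x + e_j, y)], as these
    pairs agree coordinatewise up to swapping. Hence
    [pi_l = c_l prod_i f_i(x_i)] by induction on [l], with [c_1 = 1],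
    [c_2 = gam] and [c_(l+3) = c_(l+2)^2 / (a_(l+1) c_(l+1))]; normalisation
    then forces [c_l = Z_l^-1]. *)
From HB Require Import structures.
From mathcomp Require Import all_boot all_order all_algebra.
From mathcomp Require Import ring zify.
From Stdlib Require Import ClassicalEpsilon.
Set Implicit Arguments. Unset Strict Implicit. Unset Printing Implicit Defensive.
Import Order.TTheory GRing.Theory Num.Theory.
Local Open Scope ring_scope.

Lemma inGammaP n l (x : vecZ n) :
  reflect ((forall i, 0 <= x i) /\ \sum_i x i = l%:Z) (inGamma l x).
Proof.
apply: (iffP andP) => [[/forallP x_ge0 /eqP x_sum]|[x_ge0 x_sum]]; split => //.
  by apply/forallP.
by apply/eqP.
Qed.

Lemma ebasisE n (j i : 'I_n) : ebasis j i = ((i == j) : nat)%:Z.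
Proof. by rewrite ffunE. Qed.

Lemma sum_ebasis n (j : 'I_n) : \sum_i ebasis j i = 1.
Proof.
by rewrite (bigD1 j) //= big1 ?addr0 => [|i /negbTE ij]; rewrite ebasisE ?eqxx ?ij.
Qed.

Lemma inGamma_add n l (x : vecZ n) j : inGamma l x -> inGamma l.+1 (x + ebasis j).
Proof.
move/inGammaP=> [x_ge0 x_sum]; apply/inGammaP; split.
  by move=> i; rewrite ffunE ebasisE; have := x_ge0 i; case: (i == j) => /=; lia.
rewrite (eq_bigr (fun i => x i + ebasis j i)) => [|i _]; last by rewrite ffunE.
by rewrite big_split /= x_sum sum_ebasis; lia.
Qed.

Lemma inGamma_sub n l (x : vecZ n) j :
  inGamma l.+1 x -> 0 < x j -> inGamma l (x - ebasis j).
Proof.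
move/inGammaP=> [x_ge0 x_sum] xj_gt0; apply/inGammaP; split.
  by move=> i; rewrite !ffunE; have := x_ge0 i; have [->|_] := eqVneq i j => /=; lia.
rewrite (eq_bigr (fun i => x i - ebasis j i)) => [|i _]; last by rewrite !ffunE.
by rewrite sumrB x_sum sum_ebasis; lia.
Qed.

Lemma inGamma0 n (x : vecZ n) : inGamma 0 x -> x = 0.
Proof.
move/inGammaP=> [x_ge0 x_sum]; apply/ffunP => i; rewrite ffunE.
exact: (psumr_eq0P _ x_sum).
Qed.

Lemma mem_Gamma_seq n l (x : vecZ n) : x \in Gamma_seq n l -> inGamma l x.
Proof.
move=> /mapP [y]; rewrite mem_enum inE => /eqP y_sum ->.
apply/inGammaP; split => [i|]; first by rewrite ffunE.
rewrite (eq_bigr (fun i => (val (y i))%:Z)) => [|i _]; last by rewrite ffunE.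
by rewrite -(big_morph Posz PoszD (erefl 0%:Z)) y_sum.
Qed.

Definition corner n (m : nat) (k : 'I_n) : vecZ n :=
  [ffun i => if i == k then m%:Z else 0].

Lemma inGamma_corner n m (k : 'I_n) : inGamma m (corner m k).
Proof.
apply/inGammaP; split => [i|]; first by rewrite ffunE; case: (i == k).
by rewrite (bigD1 k) //= big1 ?addr0 => [|i /negbTE ik]; rewrite ffunE ?eqxx ?ik.
Qed.

Lemma ebasis_corner n (j : 'I_n) : ebasis j = corner 1 j.
Proof. by apply/ffunP => i; rewrite ebasisE ffunE; case: (i == j). Qed.

Lemma inGamma_ebasis n (j : 'I_n) : inGamma 1%N (ebasis j).
Proof. by rewrite ebasis_corner inGamma_corner. Qed.

Lemma inGamma_cornerVsplit n l (z : vecZ n) : inGamma l z -> (0 < l)%N ->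
  (exists k, z = corner l k) \/ (exists j k, [/\ j != k, 0 < z j & 0 < z k]).
Proof.
move=> /inGammaP [z_ge0 z_sum] l_gt0.
have [k zk_gt0] : exists k, 0 < z k.
  have [/existsP [k ?]|/existsPn z_le0] := boolP [exists k, 0 < z k].
    by exists k.
  move: z_sum; rewrite big1 => [|i _]; first lia.
  by have := z_le0 i; have := z_ge0 i; lia.
have [/existsP [j /andP [jk zj_gt0]]|/existsPn others] :=
  boolP [exists j, (j != k) && (0 < z j)]; first by right; exists j, k.
have z_off i : i != k -> z i = 0.
  by move=> ik; have := others i; rewrite ik /=; have := z_ge0 i; lia.
have zk : z k = l%:Z.
  by rewrite -z_sum (bigD1 k) //= big1 ?addr0 // => i; apply: z_off.
left; exists k; apply/ffunP => i; rewrite ffunE.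
by have [->|ik] := eqVneq i k; [|exact: z_off].
Qed.

Section ProductWeight.
Variables (R : realFieldType) (n : nat) (f : 'I_n -> nat -> R).

Definition wprod (x : vecZ n) : R := \prod_i f i `|x i|%N.

Lemma wprod_gt0 x : (forall i m, 0 < f i m) -> 0 < wprod x.
Proof. by move=> f_gt0; apply: prodr_gt0. Qed.

Lemma wprod_corner m k : (forall i, f i 0 = 1) -> wprod (corner m k) = f k m.
Proof.
move=> f0; rewrite /wprod (bigD1 k) //= big1 ?mulr1 => [|i /negbTE ik];
  by rewrite ffunE ?eqxx ?ik.
Qed.

Lemma wprod_exchange (x y u v : vecZ n) :
  (forall i, (x i = u i /\ y i = v i) \/ (x i = v i /\ y i = u i)) ->
  wprod x * wprod y = wprod u * wprod v.
Proof.
move=> xy_uv; rewrite -!big_split; apply: eq_bigr => i _ /=.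
by case: (xy_uv i) => -[-> ->] //; rewrite mulrC.
Qed.

End ProductWeight.

Lemma Zconst_scaled (R : realFieldType) n l (f : 'I_n -> nat -> R)
    (p : vecZ n -> R) (c : R) :
  c != 0 -> (forall x, inGamma l x -> p x = c * wprod f x) ->
  \sum_(x <- Gamma_seq n l) p x = 1 -> Zconst l f = c^-1.
Proof.
move=> c_neq0 p_scaled p_sum.
have -> : Zconst l f = \sum_(x <- Gamma_seq n l) c^-1 * p x.
  by apply: eq_big_seq => x /mem_Gamma_seq xG; rewrite p_scaled // mulKf.
by rewrite -mulr_sumr p_sum mulr1.
Qed.

Section PairRatio.
Variables (R : realFieldType) (n : nat) (pi : nat -> vecZ n -> R).
Hypothesis pi1_gt0 : forall x, inGamma 1%N x -> 0 < pi 1%N x.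
Hypothesis pi2_gt0 : forall x, inGamma 2%N x -> 0 < pi 2%N x.
Hypothesis pi_move : forall (j k : 'I_n) (x y : vecZ n),
  inGamma 1%N x -> inGamma 1%N (x + ebasis j - ebasis k) ->
  inGamma 2%N y -> inGamma 2%N (y + ebasis j - ebasis k) ->
  x j = y j -> x k = y k ->
  pi 1%N (x + ebasis j - ebasis k) / pi 1%N x
    = pi 2%N (y + ebasis j - ebasis k) / pi 2%N y.

Definition pair_ratio (p q : 'I_n) : R :=
  pi 2%N (ebasis p + ebasis q) / (pi 1%N (ebasis p) * pi 1%N (ebasis q)).

Lemma pair_ratioC p q : pair_ratio p q = pair_ratio q p.
Proof. by rewrite /pair_ratio addrC [pi 1%N _ * _]mulrC. Qed.

Lemma pair_ratio_shift p q r : p != r -> q != r -> pair_ratio p r = pair_ratio q r.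
Proof.
move=> pr qr; have [->//|pq] := eqVneq p q.
have G2 (s t : 'I_n) : inGamma 2%N (ebasis s + ebasis t).
  exact/inGamma_add/inGamma_ebasis.
have pi_ratio : pi 1%N (ebasis p) / pi 1%N (ebasis q)
    = pi 2%N (ebasis p + ebasis r) / pi 2%N (ebasis q + ebasis r).
  have := @pi_move p q (ebasis q) (ebasis q + ebasis r).
  have -> : ebasis q + ebasis p - ebasis q = ebasis p.
    by apply/ffunP => i; rewrite !ffunE; lia.
  have -> : ebasis q + ebasis r + ebasis p - ebasis q = ebasis p + ebasis r.
    by apply/ffunP => i; rewrite !ffunE; lia.
  by apply; rewrite ?inGamma_ebasis ?G2 // !ffunE ?eqxx ?(negbTE pr) ?(negbTE qr) ?addr0.
have pi1_neq0 s : pi 1%N (ebasis s) != 0 by rewrite lt0r_neq0 ?pi1_gt0 ?inGamma_ebasis.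
have pi2_neq0 s t : pi 2%N (ebasis s + ebasis t) != 0 by rewrite lt0r_neq0 ?pi2_gt0.
rewrite /pair_ratio -[pi 2%N (ebasis p + ebasis r)](divfK (pi2_neq0 q r)) -pi_ratio.
by field; rewrite !pi1_neq0.
Qed.

Lemma pair_ratio_const p q r s :
  p != q -> r != s -> pair_ratio p q = pair_ratio r s.
Proof.
move=> pq rs; have sr : s != r by rewrite eq_sym.
have [rq|rq] := eqVneq r q.
  by rewrite -rq in pq *; rewrite (pair_ratio_shift pq sr) pair_ratioC.
have qr : q != r by rewrite eq_sym.
by rewrite (pair_ratio_shift pq rq) pair_ratioC (pair_ratio_shift qr sr) pair_ratioC.
Qed.

Lemma pair_ratio_uniform : exists2 gam : R, 0 < gam & forall p q : 'I_n,
  p != q -> pi 2%N (ebasis p + ebasis q) = gam * (pi 1%N (ebasis p) * pi 1%N (ebasis q)).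
Proof.
case: (pickP [pred pq : 'I_n * 'I_n | pq.1 != pq.2]) => [[p0 q0] /= p0q0|none].
  exists (pair_ratio p0 q0) => [|p q pq].
    by rewrite divr_gt0 ?mulr_gt0 ?pi1_gt0 ?pi2_gt0 ?inGamma_ebasis //;
      apply/inGamma_add/inGamma_ebasis.
  rewrite (pair_ratio_const p0q0 pq) divfK // mulf_neq0 //;
    by rewrite lt0r_neq0 ?pi1_gt0 ?inGamma_ebasis.
by exists 1 => // p q pq; have := none (p, q); rewrite /= pq.
Qed.

End PairRatio.

Section LevelConst.
Variables (R : fieldType) (gam : R) (a : nat -> R).

Fixpoint level_const (l : nat) : R :=
  match l with
  | ((_.+1 as l1).+1 as l2).+1 => level_const l2 ^+ 2 / (a l1 * level_const l1)
  | 2%N => gam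
  | _ => 1
  end.

End LevelConst.

Lemma level_const_gt0 (R : realFieldType) (gam : R) (a : nat -> R) m :
  0 < gam -> (forall i, 0 < a i) -> 0 < level_const gam a m.
Proof.
move=> gam_gt0 a_gt0.
suff /(_ m) [] : forall m, 0 < level_const gam a m /\ 0 < level_const gam a m.+1 by [].
elim=> [|[|k] [c_gt0 cS_gt0]]; split => //=.
by rewrite divr_gt0 ?exprn_gt0 ?mulr_gt0.
Qed.

Definition step_relation (R : realFieldType) n (pi : nat -> vecZ n -> R)
    (i : nat) (a : R) : Prop :=
  forall (j : 'I_n) (x y : vecZ n),
    inGamma i x -> inGamma i.+1 (x + ebasis j) ->
    inGamma i.+1 y -> inGamma i.+2 (y + ebasis j) ->
    x j = y j ->
    pi i.+1 (x + ebasis j) / pi i x = a * (pi i.+2 (y + ebasis j) / pi i.+1 y).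

Section ProductForm.
Variables (R : realFieldType) (n : nat) (pi : nat -> vecZ n -> R).
Variables (gam : R) (a : nat -> R).
Hypothesis pi_gt0 : forall l, (1 <= l)%N -> forall x, inGamma l x -> 0 < pi l x.
Hypothesis gam_gt0 : 0 < gam.
Hypothesis pi_pair : forall p q : 'I_n, p != q ->
  pi 2%N (ebasis p + ebasis q) = gam * (pi 1%N (ebasis p) * pi 1%N (ebasis q)).
Hypothesis pi_step : forall i, (1 <= i)%N -> step_relation pi i (a i).

(* [a i] can only be nonpositive where [pi_step] is vacuous at [i]. *)
Definition pos_step_const i := if 0 < a i then a i else 1.

Definition norm_const : nat -> R := level_const gam pos_step_const.

Definition product_factor (k : 'I_n) (m : nat) : R :=
  if m == 0%N then 1 else pi m (corner m k) / norm_const m.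

Definition scaled_at (l : nat) : Prop :=
  forall z, inGamma l z -> pi l z = norm_const l * wprod product_factor z.

Lemma norm_const_gt0 m : 0 < norm_const m.
Proof.
by apply: level_const_gt0 => // i; rewrite /pos_step_const; case: ifP.
Qed.

Lemma product_factor_gt0 k m : 0 < product_factor k m.
Proof.
rewrite /product_factor; case: eqP => [//|/eqP m_neq0].
by rewrite divr_gt0 ?norm_const_gt0 ?pi_gt0 ?inGamma_corner // lt0n.
Qed.

Lemma pi_corner m k : (0 < m)%N ->
  pi m (corner m k) = norm_const m * wprod product_factor (corner m k).
Proof.
move=> m_gt0; rewrite wprod_corner // /product_factor eqn0Ngt m_gt0 /=.
by rewrite mulrC divfK // lt0r_neq0 ?norm_const_gt0.
Qed.

Lemma scaled_at1 : scaled_at 1%N.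
Proof.
move=> z zG; have [[k ->]|[j [k [jk zj zk]]]] := inGamma_cornerVsplit zG isT.
  exact: pi_corner.
have /ffunP /(_ k) := inGamma0 (inGamma_sub zG zj).
by rewrite !ffunE eq_sym (negbTE jk) subr0 => zk0; move: zk; rewrite zk0.
Qed.

Lemma wprod_ebasis k : wprod product_factor (ebasis k) = pi 1%N (ebasis k).
Proof. by rewrite scaled_at1 ?inGamma_ebasis ?mul1r. Qed.

Lemma scaled_at2 : scaled_at 2%N.
Proof.
move=> z zG; have [[k ->]|[j [k [jk zj zk]]]] := inGamma_cornerVsplit zG isT.
  exact: pi_corner.
have zk' : 0 < (z - ebasis j) k by rewrite !ffunE eq_sym (negbTE jk) subr0.
have zE : z = ebasis j + ebasis k.
  have /eqP := inGamma0 (inGamma_sub (inGamma_sub zG zj) zk').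
  by rewrite subr_eq add0r subr_eq addrC => /eqP.
have wprod0 : wprod product_factor 0 = 1.
  by rewrite /wprod big1 // => i _; rewrite ffunE.
have := @wprod_exchange _ _ product_factor (ebasis j + ebasis k) 0 (ebasis j) (ebasis k).
rewrite wprod0 mulr1 !wprod_ebasis zE pi_pair // => -> // i.
by have [->|ij] := eqVneq i j; [left|right]; rewrite !ffunE ?eqxx ?(negbTE jk) ?(negbTE ij) //.
Qed.

Lemma scaled_atSSS m : scaled_at m.+1 -> scaled_at m.+2 -> scaled_at m.+3.
Proof.
move=> IH1 IH2 z zG.
have [[k ->]|[j [k [jk zj zk]]]] := inGamma_cornerVsplit zG isT.
  exact: pi_corner.
set y := z - ebasis j; set x := y - ebasis k.
have yG : inGamma m.+2 y := inGamma_sub zG zj.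
have yk : 0 < y k by rewrite !ffunE eq_sym (negbTE jk) subr0.
have xG : inGamma m.+1 x := inGamma_sub yG yk.
have xjG : inGamma m.+2 (x + ebasis j) := inGamma_add j xG.
have yz : y + ebasis j = z by rewrite subrK.
have zG' : inGamma m.+3 (y + ebasis j) by rewrite yz.
have xy_j : x j = y j by rewrite /x !ffunE (negbTE jk) subr0.
have := pi_step (i := m.+1) isT xG xjG yG zG' xy_j; rewrite yz => ratio.
have a_gt0 : 0 < a m.+1.
  have : 0 < pi m.+2 (x + ebasis j) / pi m.+1 x by rewrite divr_gt0 ?pi_gt0.
  by rewrite ratio pmulr_lgt0 // divr_gt0 ?pi_gt0.
have wprod_z : wprod product_factor (x + ebasis j) * wprod product_factor y
    = wprod product_factor x * wprod product_factor z.
  apply: wprod_exchange => i; have [->|ij] := eqVneq i j; [right|left].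
    by rewrite xy_j !ffunE eqxx (negbTE jk) subr0 subrK.
  by rewrite !ffunE (negbTE ij) addr0 subr0.
have -> : pi m.+3 z = a m.+1 * (pi m.+3 z / pi m.+2 y) * pi m.+2 y / a m.+1.
  by field; rewrite !lt0r_neq0 ?pi_gt0.
have c_rec : norm_const m.+3
    = norm_const m.+2 ^+ 2 / (pos_step_const m.+1 * norm_const m.+1) by [].
rewrite -ratio IH1 // !IH2 // c_rec /pos_step_const a_gt0.
rewrite -[wprod _ z](mulKf (lt0r_neq0 (wprod_gt0 x product_factor_gt0))) -wprod_z.
by field; rewrite !lt0r_neq0 ?norm_const_gt0 ?wprod_gt0 //; exact: product_factor_gt0.
Qed.

Lemma pi_scaled l : (1 <= l)%N -> scaled_at l.
Proof.
suff scaled2 m : scaled_at m.+1 /\ scaled_at m.+2 by case: l => // m _; case: (scaled2 m).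
elim: m => [|m [IH1 IH2]]; first by split; [exact: scaled_at1 | exact: scaled_at2].
by split; [|exact: scaled_atSSS].
Qed.

End ProductForm.

Theorem proposition6p5 (R : realFieldType) (n : nat) (hn : (1 <= n)%N)
  (pi : nat -> vecZ n -> R)
  (* each pi_l (l >= 1) is a probability distribution on Gamma_l, strictly positive *)
  (hpos : forall l : nat, (1 <= l)%N -> forall x, inGamma l x -> 0 < pi l x)
  (hsum : forall l : nat, (1 <= l)%N -> \sum_(x <- Gamma_seq n l) pi l x = 1)
  (ha : forall i : nat, (1 <= i)%N -> forall (j k : 'I_n) (x y : vecZ n),
      inGamma i x -> inGamma i (x + ebasis j - ebasis k) ->
      inGamma i.+1 y -> inGamma i.+1 (y + ebasis j - ebasis k) ->
      x j = y j -> x k = y k ->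
      pi i (x + ebasis j - ebasis k) / pi i x
        = pi i.+1 (y + ebasis j - ebasis k) / pi i.+1 y)
  (hb : forall i : nat, (1 <= i)%N -> exists a : R,
      forall (j : 'I_n) (x y : vecZ n),
      inGamma i x -> inGamma i.+1 (x + ebasis j) ->
      inGamma i.+1 y -> inGamma i.+2 (y + ebasis j) ->
      x j = y j ->
      pi i.+1 (x + ebasis j) / pi i x = a * (pi i.+2 (y + ebasis j) / pi i.+1 y)) :
  exists f : 'I_n -> nat -> R,
    (forall (i : 'I_n) (m : nat), 0 < f i m) /\
    (forall l : nat, (1 <= l)%N -> forall x : vecZ n, inGamma l x ->
       pi l x = (Zconst l f)^-1 * \prod_i f i `|x i|%N).
Proof.
have [gam gam_gt0 pi_pair] := pair_ratio_uniform (hpos 1%N isT) (hpos 2%N isT) (ha 1%N isT).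
have /choice [a pi_step] : forall i, exists a : R, (1 <= i)%N -> step_relation pi i a.
  move=> i; case: (leqP 1 i) => [/hb [a Ha]|_]; last by exists 0.
  by exists a.
exists (product_factor pi gam a); split=> [k m|l l_gt0 x xG].
  exact: product_factor_gt0.
have scaled := pi_scaled hpos gam_gt0 pi_pair pi_step l_gt0.
rewrite (Zconst_scaled _ scaled (hsum l l_gt0)) ?invrK; first exact: scaled.
by rewrite lt0r_neq0 ?norm_const_gt0.
Qed.
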